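(* For every $k,\ell\ge1$, $\mathsf{RT}^2_{k,\ell}\le_c\mathsf{DT}^2_{2k,2\ell+1}$.
   Context: $\mathsf{RT}^2_{k,\ell}$: instances are colorings $f:[\mathbb N]^2\to k$; solutions are infinite sets $H\subseteq\mathbb N$ with $|f([H]^2)|\le\ell$. $\mathsf{DT}^2_{k,\ell}$: instances are colorings $f:[\mathbb Q]^2\to k$ (with $\mathbb Q$ computably presented); solutions are sets $S\subseteq\mathbb Q$ such that $(S,<)$ is a dense linear order without endpoints and $|f([S]^2)|\le\ell$. Computable reducibility: a problem $\mathsf Q$ is computably reducible to $\mathsf P$, written $\mathsf Q\le_c\mathsf P$, if every $\mathsf Q$-instance $X$ computes a $\mathsf P$-instance $\widehat X$ such that for every $\mathsf P$-solution $\widehat Y$ to $\widehat X$, $X\oplus\widehat Y$ computes a $\mathsf Q$-solution to $X$. *)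

From Stdlib Require Import Arith List ZArith QArith Cantor.
Import ListNotations.
Local Open Scope nat_scope.

Inductive prog : Type :=
| PZero : prog
| PSucc : prog
| PProj : nat -> prog                   (* i-th argument (0 if absent) *)
| POracle : prog
| PComp : prog -> list prog -> prog
| PPrim : prog -> prog -> prog          (* primitive recursion on x0 *)
| PMu : prog -> prog.

Inductive eval (o : nat -> nat) : prog -> list nat -> nat -> Prop :=
| eZero xs : eval o PZero xs 0
| eSucc xs : eval o PSucc xs (S (hd 0 xs))
| eProj i xs : eval o (PProj i) xs (nth i xs 0)
| eOracle xs : eval o POracle xs (o (hd 0 xs))
| eComp f gs xs ys y :
    evals o gs xs ys -> eval o f ys y -> eval o (PComp f gs) xs y
| ePrim0 b s xs y : eval o b xs y -> eval o (PPrim b s) (0 :: xs) y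
| ePrimS b s n xs r y :
    eval o (PPrim b s) (n :: xs) r -> eval o s (n :: r :: xs) y ->
    eval o (PPrim b s) (S n :: xs) y
| eMu f xs n :
    eval o f (n :: xs) 0 ->
    (forall m, m < n -> exists v, v <> 0 /\ eval o f (m :: xs) v) ->
    eval o (PMu f) xs n
with evals (o : nat -> nat) : list prog -> list nat -> list nat -> Prop :=
| esNil xs : evals o [] xs []
| esCons g gs xs y ys :
    eval o g xs y -> evals o gs xs ys -> evals o (g :: gs) xs (y :: ys).

(** [o] computes [g] (i.e. g <=_T o). *)
Definition computes (o g : nat -> nat) : Prop :=
  exists e : prog, forall n, eval o e [n] (g n).

Definition join (X Y : nat -> nat) : nat -> nat :=
  fun n => if Nat.even n then X (Nat.div2 n) else Y (Nat.div2 n).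

Definition chi (S : nat -> bool) : nat -> nat := fun n => if S n then 1 else 0.

Definition oracle2 (f : nat -> nat -> nat) : nat -> nat :=
  fun n => f (fst (Cantor.of_nat n)) (snd (Cantor.of_nat n)).

(** * Computable presentation of Q
   The code n, with (a,b) = Cantor.of_nat n, denotes the fraction
   zdec a / (b+1) where zdec : nat -> Z is the standard bijection
   0,1,2,3,4,.. |-> 0,-1,1,-2,2,...; codes are valid when the fraction is in
   lowest terms, so valid codes are in bijection with Q. *)
Definition zdec (a : nat) : Z :=
  if Nat.even a then Z.of_nat (Nat.div2 a) else (- Z.of_nat (Nat.div2 (S a)))%Z.

Definition qnum (n : nat) : Z := zdec (fst (Cantor.of_nat n)).
Definition qden (n : nat) : positive := Pos.of_succ_nat (snd (Cantor.of_nat n)).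

Definition qcode (n : nat) : Prop := Z.gcd (qnum n) (Z.pos (qden n)) = 1%Z.
Definition qval (n : nat) : Q := Qmake (qnum n) (qden n).
Definition qlt (i j : nat) : Prop := Qlt (qval i) (qval j).

(** RT^2_{k,l}-instance: f : [N]^2 -> k, where f x y (x < y) is the color of {x,y}. *)
Definition RT_instance (k : nat) (f : nat -> nat -> nat) : Prop :=
  forall x y, x < y -> f x y < k.

Definition infinite_set (H : nat -> bool) : Prop :=
  forall n, exists m, n <= m /\ H m = true.

Definition RT_solution (l : nat) (f : nat -> nat -> nat) (H : nat -> bool) : Prop :=
  infinite_set H /\
  exists cols : list nat, length cols <= l /\
    forall x y, x < y -> H x = true -> H y = true -> In (f x y) cols.

(** DT^2_{k,l}-instance: coloring of unordered pairs of rationals (given by codes);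
    the color of {i,j} for codes i < j (as naturals) is g i j. *)
Definition DT_instance (k : nat) (g : nat -> nat -> nat) : Prop :=
  forall i j, qcode i -> qcode j -> i < j -> g i j < k.

Definition dense_no_endpoints (S : nat -> bool) : Prop :=
  (forall i, S i = true -> qcode i) /\
  (exists i, S i = true) /\
  (forall i j, S i = true -> S j = true -> qlt i j ->
     exists m, S m = true /\ qlt i m /\ qlt m j) /\
  (forall i, S i = true ->
     exists a b, S a = true /\ S b = true /\ qlt a i /\ qlt i b).

Definition DT_solution (l : nat) (g : nat -> nat -> nat) (S : nat -> bool) : Prop :=
  dense_no_endpoints S /\
  exists cols : list nat, length cols <= l /\
    forall i j, i < j -> S i = true -> S j = true -> In (g i j) cols.

Definition RT_le_c_DT (k l k' l' : nat) : Prop :=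
  forall f, RT_instance k f ->
    exists g, DT_instance k' g /\ computes (oracle2 f) (oracle2 g) /\
      forall S, DT_solution l' g S ->
        exists H, RT_solution l f H /\ computes (join (oracle2 f) (chi S)) (chi H).

(* Colour a pair of codes i < j by 2 f(i,j) + [q_i < q_j]: the quotient by 2 recovers
   f, the parity records whether the pair is increasing in Q.  A dense S without endpoints
   using at most 2l+1 colours uses at most l colours of some parity b.  Above and below any
   point of S lie elements of S with arbitrarily large codes, so searching S we find codes
   h(0) < h(1) < ... in S whose consecutive rationals are ordered as prescribed by b.  Every
   pair from H = range h then has order bit b, so f takes at most l values on [H]^2, and H
   is decidable from h (hence from S) because h is increasing. *)

From Stdlib Require Import Arith List ZArith QArith Cantor Lia Classical ClassicalEpsilon.
Import ListNotations.
Local Open Scope nat_scope.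

Definition least (P : nat -> Prop) : nat :=
  epsilon (inhabits 0) (fun n => P n /\ forall m, P m -> n <= m).

Lemma least_spec (P : nat -> Prop) :
  (exists n, P n) -> P (least P) /\ forall m, P m -> least P <= m.
Proof.
  intros HP. unfold least. apply epsilon_spec.
  destruct (dec_inh_nat_subset_has_unique_least_element P (fun n => classic (P n)) HP)
    as [n [Hn _]].
  now exists n.
Qed.

Lemma least_unique (P : nat -> Prop) n :
  P n -> (forall m, P m -> n <= m) -> least P = n.
Proof.
  intros Pn Hmin. destruct (least_spec P (ex_intro _ n Pn)) as [Pl Hl].
  specialize (Hl n Pn). specialize (Hmin _ Pl). lia.
Qed.

Fixpoint prim_rec (B St : list nat -> nat) (n : nat) (xs : list nat) : nat :=
  match n with
  | 0 => B xs
  | S n' => St (n' :: prim_rec B St n' xs :: xs)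
  end.

Section RecursiveIn.

Variable o : nat -> nat.

Definition rec_in (F : list nat -> nat) : Prop :=
  exists e, forall xs, eval o e xs (F xs).

Lemma rec_in_ext F G : (forall xs, G xs = F xs) -> rec_in F -> rec_in G.
Proof. intros E [e He]. exists e. intros xs. rewrite E. apply He. Qed.

Lemma rec_in_proj i : rec_in (fun xs => nth i xs 0).
Proof. exists (PProj i). constructor. Qed.

Lemma rec_in_S F : rec_in F -> rec_in (fun xs => S (F xs)).
Proof.
  intros [e He]. exists (PComp PSucc [e]). intros xs.
  econstructor; [repeat constructor; apply He | constructor].
Qed.

Lemma rec_in_const c : rec_in (fun _ => c).
Proof.
  induction c as [|c IH].
  - exists PZero. constructor.
  - now apply rec_in_S in IH.
Qed.

Lemma rec_in_oracle F : rec_in F -> rec_in (fun xs => o (F xs)).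
Proof.
  intros [e He]. exists (PComp POracle [e]). intros xs.
  econstructor; [repeat constructor; apply He | constructor].
Qed.

Lemma rec_in_comp F Gs :
  rec_in F -> Forall rec_in Gs -> rec_in (fun xs => F (map (fun G => G xs) Gs)).
Proof.
  intros [f Hf] HGs.
  assert (Hgs : exists gs, forall xs, evals o gs xs (map (fun G => G xs) Gs)).
  { induction HGs as [|G Gs [g Hg] _ [gs Hgs]].
    - exists []. constructor.
    - exists (g :: gs). intros xs. constructor; auto. }
  destruct Hgs as [gs Hgs]. exists (PComp f gs). intros xs. econstructor; eauto.
Qed.

Lemma rec_in_comp1 (u : nat -> nat) F :
  rec_in (fun xs => u (nth 0 xs 0)) -> rec_in F -> rec_in (fun xs => u (F xs)).
Proof. intros Hu HF. exact (rec_in_comp _ [F] Hu (Forall_cons _ HF (Forall_nil _))). Qed.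

Lemma rec_in_comp2 (u : nat -> nat -> nat) F G :
  rec_in (fun xs => u (nth 0 xs 0) (nth 1 xs 0)) -> rec_in F -> rec_in G ->
  rec_in (fun xs => u (F xs) (G xs)).
Proof.
  intros Hu HF HG.
  exact (rec_in_comp _ [F; G] Hu (Forall_cons _ HF (Forall_cons _ HG (Forall_nil _)))).
Qed.

Lemma rec_in_prim B St :
  rec_in B -> rec_in St -> rec_in (fun xs => prim_rec B St (nth 0 xs 0) [nth 1 xs 0]).
Proof.
  intros [b Hb] [s Hs]. exists (PComp (PPrim b s) [PProj 0; PProj 1]). intros xs.
  econstructor; [repeat constructor|].
  induction (nth 0 xs 0); simpl; econstructor; eauto.
Qed.

Lemma rec_in_iter (h step : nat -> nat) :
  (forall n, h (S n) = step (h n)) ->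
  rec_in (fun xs => step (nth 0 xs 0)) -> rec_in (fun xs => h (nth 0 xs 0)).
Proof.
  intros Hh Hstep.
  apply (rec_in_ext (fun xs => prim_rec (fun _ => h 0) (fun ys => step (nth 1 ys 0))
                                   (nth 0 xs 0) [nth 1 xs 0])).
  - intros xs. induction (nth 0 xs 0); simpl; congruence.
  - apply rec_in_prim; [apply rec_in_const|].
    exact (rec_in_comp1 _ _ Hstep (rec_in_proj 1)).
Qed.

Lemma rec_in_pred F : rec_in F -> rec_in (fun xs => pred (F xs)).
Proof.
  apply rec_in_comp1.
  apply (rec_in_ext (fun xs => prim_rec (fun _ => 0) (fun ys => nth 0 ys 0)
                                 (nth 0 xs 0) [nth 1 xs 0])).
  - intros xs. now destruct (nth 0 xs 0).
  - apply rec_in_prim; [apply rec_in_const | apply rec_in_proj].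
Qed.

Lemma rec_in_add F G : rec_in F -> rec_in G -> rec_in (fun xs => F xs + G xs).
Proof.
  apply rec_in_comp2.
  apply (rec_in_ext (fun xs => prim_rec (fun ys => nth 0 ys 0) (fun ys => S (nth 1 ys 0))
                                 (nth 0 xs 0) [nth 1 xs 0])).
  - intros xs. induction (nth 0 xs 0); simpl; congruence.
  - apply rec_in_prim; [apply rec_in_proj | apply rec_in_S, rec_in_proj].
Qed.

Lemma rec_in_mul F G : rec_in F -> rec_in G -> rec_in (fun xs => F xs * G xs).
Proof.
  apply rec_in_comp2.
  apply (rec_in_ext (fun xs => prim_rec (fun _ => 0) (fun ys => nth 2 ys 0 + nth 1 ys 0)
                                 (nth 0 xs 0) [nth 1 xs 0])).
  - intros xs. induction (nth 0 xs 0); simpl; congruence.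
  - apply rec_in_prim; [apply rec_in_const | apply rec_in_add; apply rec_in_proj].
Qed.

Lemma rec_in_sub F G : rec_in F -> rec_in G -> rec_in (fun xs => F xs - G xs).
Proof.
  intros HF HG. apply (rec_in_comp2 (fun b a => a - b)); auto.
  apply (rec_in_ext (fun xs => prim_rec (fun ys => nth 0 ys 0) (fun ys => pred (nth 1 ys 0))
                                 (nth 0 xs 0) [nth 1 xs 0])).
  - intros xs. induction (nth 0 xs 0); simpl; lia.
  - apply rec_in_prim; [apply rec_in_proj | apply rec_in_pred, rec_in_proj].
Qed.

Lemma rec_in_ltb F G : rec_in F -> rec_in G -> rec_in (fun xs => Nat.b2n (F xs <? G xs)).
Proof.
  intros HF HG. apply (rec_in_ext (fun xs => 1 - (1 - (G xs - F xs)))).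
  - intros xs. destruct (Nat.ltb_spec (F xs) (G xs)); cbn [Nat.b2n]; lia.
  - repeat apply rec_in_sub; auto using rec_in_const.
Qed.

Lemma rec_in_leb F G : rec_in F -> rec_in G -> rec_in (fun xs => Nat.b2n (F xs <=? G xs)).
Proof.
  intros HF HG. apply (rec_in_ext (fun xs => 1 - (F xs - G xs))).
  - intros xs. destruct (Nat.leb_spec (F xs) (G xs)); cbn [Nat.b2n]; lia.
  - apply rec_in_sub; [apply rec_in_const | now apply rec_in_sub].
Qed.

Lemma rec_in_eqb F G : rec_in F -> rec_in G -> rec_in (fun xs => Nat.b2n (F xs =? G xs)).
Proof.
  intros HF HG. apply (rec_in_ext (fun xs => 1 - ((F xs - G xs) + (G xs - F xs)))).
  - intros xs. destruct (Nat.eqb_spec (F xs) (G xs)); cbn [Nat.b2n]; lia.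
  - apply rec_in_sub; [apply rec_in_const | apply rec_in_add; apply rec_in_sub; auto].
Qed.

Lemma rec_in_andb (p q : list nat -> bool) :
  rec_in (fun xs => Nat.b2n (p xs)) -> rec_in (fun xs => Nat.b2n (q xs)) ->
  rec_in (fun xs => Nat.b2n (p xs && q xs)).
Proof.
  intros Hp Hq. apply (rec_in_ext (fun xs => Nat.b2n (p xs) * Nat.b2n (q xs))).
  - intros xs. now destruct (p xs), (q xs).
  - now apply rec_in_mul.
Qed.

Lemma rec_in_implb (p q : list nat -> bool) :
  rec_in (fun xs => Nat.b2n (p xs)) -> rec_in (fun xs => Nat.b2n (q xs)) ->
  rec_in (fun xs => Nat.b2n (implb (p xs) (q xs))).
Proof.
  intros Hp Hq. apply (rec_in_ext (fun xs => 1 - (Nat.b2n (p xs) - Nat.b2n (q xs)))).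
  - intros xs. now destruct (p xs), (q xs).
  - apply rec_in_sub; [apply rec_in_const | now apply rec_in_sub].
Qed.

Lemma rec_in_eqb_bool (p q : list nat -> bool) :
  rec_in (fun xs => Nat.b2n (p xs)) -> rec_in (fun xs => Nat.b2n (q xs)) ->
  rec_in (fun xs => Nat.b2n (Bool.eqb (p xs) (q xs))).
Proof.
  intros Hp Hq. apply (rec_in_ext (fun xs => Nat.b2n (Nat.b2n (p xs) =? Nat.b2n (q xs)))).
  - intros xs. now destruct (p xs), (q xs).
  - now apply rec_in_eqb.
Qed.

Lemma rec_in_least (p : list nat -> bool) :
  rec_in (fun xs => Nat.b2n (p xs)) -> (forall xs, exists n, p (n :: xs) = true) ->
  rec_in (fun xs => least (fun n => p (n :: xs) = true)).
Proof.
  intros Hp Hex.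
  destruct (rec_in_sub _ _ (rec_in_const 1) Hp) as [e He].
  exists (PMu e). intros xs. destruct (least_spec _ (Hex xs)) as [Hl Hmin].
  constructor.
  - specialize (He (least (fun n => p (n :: xs) = true) :: xs)). now rewrite Hl in He.
  - intros m Hm. exists (1 - Nat.b2n (p (m :: xs))). split; [|apply He].
    destruct (p (m :: xs)) eqn:E; [apply Hmin in E; lia | discriminate].
Qed.

End RecursiveIn.

Create HintDb rec_in discriminated.
#[local] Hint Resolve rec_in_proj rec_in_const rec_in_S rec_in_oracle rec_in_add rec_in_mul
  rec_in_sub rec_in_ltb rec_in_leb rec_in_eqb rec_in_andb rec_in_implb
  rec_in_eqb_bool : rec_in.

Ltac rec_in_auto := solve [eauto 100 with rec_in nocore].

Lemma computes_of_rec_in o g : rec_in o (fun xs => g (nth 0 xs 0)) -> computes o g.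
Proof. intros [e He]. exists e. intros n. exact (He [n]). Qed.

Lemma rec_in_div2 o F : rec_in o F -> rec_in o (fun xs => Nat.div2 (F xs)).
Proof.
  apply rec_in_comp1.
  apply (rec_in_ext _ (fun xs => least (fun m => nth 0 xs 0 <? S (S (m + m)) = true))).
  - intros xs. pose proof (Nat.div2_odd (nth 0 xs 0)) as E.
    assert (Nat.b2n (Nat.odd (nth 0 xs 0)) <= 1) by (destruct (Nat.odd (nth 0 xs 0)); cbn; lia).
    symmetry. apply least_unique; [apply Nat.ltb_lt; lia|].
    intros m Hm%Nat.ltb_lt. lia.
  - apply (rec_in_least o (fun ys => nth 1 ys 0 <? S (S (nth 0 ys 0 + nth 0 ys 0)))).
    + rec_in_auto.
    + intros xs. exists (nth 0 xs 0). apply Nat.ltb_lt. cbn. lia.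
Qed.
#[local] Hint Resolve rec_in_div2 : rec_in.

Lemma of_nat_double n :
  n + n = snd (of_nat n) + snd (of_nat n)
          + (fst (of_nat n) + snd (of_nat n)) * S (fst (of_nat n) + snd (of_nat n)).
Proof.
  rewrite <- (cancel_to_of n) at 1 2. destruct (of_nat n) as [x y]; cbn [fst snd].
  pose proof (to_nat_spec x y). rewrite (Nat.add_comm x y). lia.
Qed.

Lemma of_nat_sum n :
  fst (of_nat n) + snd (of_nat n) = least (fun d => n + n <? S d * S (S d) = true).
Proof.
  pose proof (of_nat_double n) as E.
  set (x := fst (of_nat n)) in *. set (y := snd (of_nat n)) in *.
  symmetry. apply least_unique.
  - apply Nat.ltb_lt. nia.
  - intros m Hm%Nat.ltb_lt. destruct (Nat.le_gt_cases (x + y) m) as [|Hlt]; [lia|].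
    assert (S m * S (S m) <= (x + y) * S (x + y)) by (apply Nat.mul_le_mono; lia). lia.
Qed.

Lemma rec_in_of_nat_sum o F :
  rec_in o F -> rec_in o (fun xs => fst (of_nat (F xs)) + snd (of_nat (F xs))).
Proof.
  intros HF. apply (rec_in_comp1 o (fun n => fst (of_nat n) + snd (of_nat n))); auto.
  apply (rec_in_ext _ (fun xs => least (fun d => nth 0 xs 0 + nth 0 xs 0 <? S d * S (S d) = true))).
  - intros xs. apply of_nat_sum.
  - apply (rec_in_least o
             (fun ys => nth 1 ys 0 + nth 1 ys 0 <? S (nth 0 ys 0) * S (S (nth 0 ys 0)))).
    + rec_in_auto.
    + intros xs. exists (nth 0 xs 0 + nth 0 xs 0). apply Nat.ltb_lt. cbn. nia.
Qed.
#[local] Hint Resolve rec_in_of_nat_sum : rec_in.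

Lemma rec_in_of_nat_snd o F : rec_in o F -> rec_in o (fun xs => snd (of_nat (F xs))).
Proof.
  intros HF.
  apply (rec_in_ext _ (fun xs =>
    Nat.div2 (F xs + F xs - (fst (of_nat (F xs)) + snd (of_nat (F xs)))
                            * S (fst (of_nat (F xs)) + snd (of_nat (F xs)))))).
  - intros xs. rewrite (of_nat_double (F xs)), Nat.add_sub.
    replace (_ + _) with (2 * snd (of_nat (F xs))) by lia. symmetry. apply Nat.div2_double.
  - rec_in_auto.
Qed.
#[local] Hint Resolve rec_in_of_nat_snd : rec_in.

Lemma rec_in_of_nat_fst o F : rec_in o F -> rec_in o (fun xs => fst (of_nat (F xs))).
Proof.
  intros HF.
  apply (rec_in_ext _ (fun xs => fst (of_nat (F xs)) + snd (of_nat (F xs)) - snd (of_nat (F xs)))).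
  - intros xs. lia.
  - rec_in_auto.
Qed.
#[local] Hint Resolve rec_in_of_nat_fst : rec_in.

Lemma rec_in_odd o F : rec_in o F -> rec_in o (fun xs => Nat.b2n (Nat.odd (F xs))).
Proof.
  intros HF. apply (rec_in_ext _ (fun xs => F xs - 2 * Nat.div2 (F xs))).
  - intros xs. pose proof (Nat.div2_odd (F xs)). lia.
  - rec_in_auto.
Qed.
#[local] Hint Resolve rec_in_odd : rec_in.

Definition qltb (i j : nat) : bool := negb (Qle_bool (qval j) (qval i)).

Lemma qltb_spec i j : qltb i j = true <-> qlt i j.
Proof.
  unfold qltb, qlt. rewrite Bool.negb_true_iff, <- Bool.not_true_iff_false, Qle_bool_iff.
  split; [apply Qnot_le_lt | apply Qlt_not_le].
Qed.

Definition qnum_pos (i : nat) : nat :=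
  (1 - Nat.b2n (Nat.odd (fst (of_nat i)))) * Nat.div2 (fst (of_nat i)).
Definition qnum_neg (i : nat) : nat :=
  Nat.b2n (Nat.odd (fst (of_nat i))) * Nat.div2 (S (fst (of_nat i))).
Definition qden_nat (i : nat) : nat := S (snd (of_nat i)).

(* Splitting the signed numerator into two naturals turns the cross-multiplied comparison
   of two rationals into a comparison of natural numbers. *)
Lemma qnum_split i : qnum i = (Z.of_nat (qnum_pos i) - Z.of_nat (qnum_neg i))%Z.
Proof.
  unfold qnum, zdec, qnum_pos, qnum_neg. rewrite <- Nat.negb_odd.
  destruct (Nat.odd _); cbn [negb Nat.b2n]; lia.
Qed.

Lemma qltb_nat i j :
  qltb i j = (qnum_pos i * qden_nat j + qnum_neg j * qden_nat i
              <? qnum_pos j * qden_nat i + qnum_neg i * qden_nat j).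
Proof.
  unfold qltb, Qle_bool, qval. cbn [Qnum Qden].
  rewrite !qnum_split. unfold qden, qden_nat. rewrite !Zpos_P_of_succ_nat.
  destruct (Nat.ltb_spec (qnum_pos i * S (snd (of_nat j)) + qnum_neg j * S (snd (of_nat i)))
                        (qnum_pos j * S (snd (of_nat i)) + qnum_neg i * S (snd (of_nat j))));
  match goal with |- negb (Z.leb ?u ?v) = _ => destruct (Z.leb_spec u v) end; cbn [negb]; nia.
Qed.

Lemma rec_in_qltb o F G :
  rec_in o F -> rec_in o G -> rec_in o (fun xs => Nat.b2n (qltb (F xs) (G xs))).
Proof.
  intros HF HG.
  apply (rec_in_ext _ (fun xs => Nat.b2n
    (qnum_pos (F xs) * qden_nat (G xs) + qnum_neg (G xs) * qden_nat (F xs)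
     <? qnum_pos (G xs) * qden_nat (F xs) + qnum_neg (F xs) * qden_nat (G xs)))).
  - intros xs. now rewrite qltb_nat.
  - unfold qnum_pos, qnum_neg, qden_nat. rec_in_auto.
Qed.
#[local] Hint Resolve rec_in_qltb : rec_in.

Lemma join_odd X Y n : join X Y (S (2 * n)) = Y n.
Proof.
  unfold join. rewrite Nat.div2_succ_double.
  change (S (2 * n)) with (1 + 2 * n). now rewrite Nat.even_add_mul_2.
Qed.

Lemma rec_in_join_chi X D F :
  rec_in (join X (chi D)) F -> rec_in (join X (chi D)) (fun xs => Nat.b2n (D (F xs))).
Proof.
  intros HF. apply (rec_in_ext _ (fun xs => join X (chi D) (S (2 * F xs)))).
  - intros xs. now rewrite join_odd.
  - rec_in_auto.
Qed.
#[local] Hint Resolve rec_in_join_chi : rec_in.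

Definition split_coloring (f : nat -> nat -> nat) (i j : nat) : nat :=
  2 * f i j + Nat.b2n (qltb i j).

Lemma double_add_b2n_decode c b :
  Nat.div2 (2 * c + Nat.b2n b) = c /\ Nat.odd (2 * c + Nat.b2n b) = b.
Proof.
  split; [|rewrite Nat.add_comm, Nat.odd_add_mul_2; now destruct b].
  destruct b; cbn [Nat.b2n].
  - now rewrite Nat.add_1_r, Nat.div2_succ_double.
  - now rewrite Nat.add_0_r, Nat.div2_double.
Qed.

Lemma split_coloring_instance k f : RT_instance k f -> DT_instance (2 * k) (split_coloring f).
Proof.
  intros Hf i j _ _ Hij. specialize (Hf i j Hij). unfold split_coloring.
  destruct (qltb i j); cbn [Nat.b2n]; lia.
Qed.

Lemma split_coloring_computable f : computes (oracle2 f) (oracle2 (split_coloring f)).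
Proof.
  apply computes_of_rec_in.
  apply (rec_in_ext _ (fun xs => 2 * oracle2 f (nth 0 xs 0)
     + Nat.b2n (qltb (fst (of_nat (nth 0 xs 0))) (snd (of_nat (nth 0 xs 0)))))).
  - reflexivity.
  - rec_in_auto.
Qed.

Lemma parity_class_small (cols : list nat) l : length cols <= 2 * l + 1 ->
  exists up, length (filter (fun c => Bool.eqb (Nat.odd c) up) cols) <= l.
Proof.
  intros Hlen. pose proof (filter_length Nat.odd cols) as Hsplit.
  destruct (Nat.le_gt_cases (length (filter Nat.odd cols)) l) as [Hodd|Heven].
  - exists true. rewrite (filter_ext _ Nat.odd); [exact Hodd|].
    intros c. now destruct (Nat.odd c).
  - exists false. rewrite (filter_ext _ (fun c => negb (Nat.odd c))); [lia|].
    intros c. now destruct (Nat.odd c).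
Qed.

Lemma bounded_without_minimal_empty (R : nat -> nat -> Prop) :
  (forall a b c, R a b -> R b c -> R a c) -> (forall a, ~ R a a) ->
  forall N (P : nat -> Prop), (forall y, P y -> y < N) ->
  (forall y, P y -> exists m, P m /\ R m y) -> forall y, ~ P y.
Proof.
  intros Rtrans Rirr N. induction N as [|N IH]; intros P Hbound Hdesc y Py.
  - specialize (Hbound y Py). lia.
  - destruct (classic (P N)) as [PN|nPN].
    + destruct (Hdesc N PN) as [m [Pm Rm]].
      apply (IH (fun z => P z /\ R z N)) with m; [| |now split].
      * intros z [Pz Rz]. specialize (Hbound z Pz).
        destruct (Nat.eq_dec z N) as [->|]; [now apply Rirr in Rz | lia].
      * intros z [Pz Rz]. destruct (Hdesc z Pz) as [m' [Pm' Rm']]. eauto.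
    + apply (IH P) with y; auto. intros z Pz. specialize (Hbound z Pz).
      destruct (Nat.eq_dec z N) as [->|]; [contradiction | lia].
Qed.

Lemma without_minimal_unbounded (R : nat -> nat -> Prop) (P : nat -> Prop) :
  (forall a b c, R a b -> R b c -> R a c) -> (forall a, ~ R a a) ->
  (forall y, P y -> exists m, P m /\ R m y) -> (exists y, P y) ->
  forall N, exists y, N < y /\ P y.
Proof.
  intros Rtrans Rirr Hdesc [y Py] N. apply NNPP. intros Hnone.
  apply (bounded_without_minimal_empty R Rtrans Rirr (S N) P) with y; auto.
  intros z Pz. apply Nat.nle_gt. intros Hz. apply Hnone. exists z. split; [lia | exact Pz].
Qed.

Lemma dense_above_unbounded D : dense_no_endpoints D ->
  forall r, D r = true -> forall N, exists y, N < y /\ D y = true /\ qlt r y.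
Proof.
  intros [_ [_ [Hdense Hends]]] r Dr N.
  destruct (without_minimal_unbounded qlt (fun y => D y = true /\ qlt r y)
              (fun a b c => Qlt_trans _ _ _) (fun a => Qlt_irrefl _)) with (N := N)
    as [y [Hy [Dy Ry]]]; eauto.
  - intros y [Dy Ry]. destruct (Hdense r y Dr Dy Ry) as [m [Dm [Rm Rmy]]]. eauto.
  - destruct (Hends r Dr) as [a [b [_ [Db [_ Rb]]]]]. eauto.
Qed.

Lemma dense_below_unbounded D : dense_no_endpoints D ->
  forall r, D r = true -> forall N, exists y, N < y /\ D y = true /\ qlt y r.
Proof.
  intros [_ [_ [Hdense Hends]]] r Dr N.
  destruct (without_minimal_unbounded (fun a b => qlt b a) (fun y => D y = true /\ qlt y r)
              (fun a b c Hab Hbc => Qlt_trans _ _ _ Hbc Hab) (fun a => Qlt_irrefl _)) with (N := N)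
    as [y [Hy [Dy Ry]]]; eauto.
  - intros y [Dy Ry]. destruct (Hdense y r Dy Dr Ry) as [m [Dm [Rym Rm]]]. eauto.
  - destruct (Hends r Dr) as [a [b [Da [_ [Ra _]]]]]. eauto.
Qed.

Lemma qltb_eq_trans up a b c : qltb a b = up -> qltb b c = up -> qltb a c = up.
Proof.
  destruct up.
  - rewrite !qltb_spec. apply Qlt_trans.
  - unfold qltb. rewrite !Bool.negb_false_iff, !Qle_bool_iff. intros Hab Hbc.
    eapply Qle_trans; eauto.
Qed.

Lemma rel_succ_to_lt (P : nat -> nat -> Prop) (h : nat -> nat) :
  (forall a b c, P a b -> P b c -> P a c) -> (forall n, P (h n) (h (S n))) ->
  forall n m, n < m -> P (h n) (h m).
Proof.
  intros Ptrans Hstep n m Hnm. induction Hnm as [|m _ IH]; eauto.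
Qed.

Section MonotoneChain.

Variable D : nat -> bool.
Variable up : bool.

Definition chain_step_ok (r y : nat) : bool := D y && (r <? y) && Bool.eqb (qltb r y) up.

(* The guard makes the search succeed at 0 when r is not in D, so that [chain_next] is a
   total function computable by unbounded search. *)
Definition chain_next (r : nat) : nat :=
  least (fun y => implb (D r) (chain_step_ok r y) = true).

Fixpoint chain (n : nat) : nat :=
  match n with
  | 0 => least (fun y => D y = true)
  | S n' => chain_next (chain n')
  end.

Definition chain_set (m : nat) : bool := chain (least (fun n => m <=? chain n = true)) =? m.

Hypothesis HD : dense_no_endpoints D.

Lemma chain_step_exists r : D r = true -> exists y, chain_step_ok r y = true.
Proof.
  intros Dr. unfold chain_step_ok.
  destruct up.
  - destruct (dense_above_unbounded D HD r Dr r) as [y [Hy [Dy Ry]]].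
    exists y. rewrite Dy, (proj2 (Nat.ltb_lt _ _) Hy), (proj2 (qltb_spec r y) Ry). reflexivity.
  - destruct (dense_below_unbounded D HD r Dr r) as [y [Hy [Dy Ry]]].
    exists y. rewrite Dy, (proj2 (Nat.ltb_lt _ _) Hy).
    destruct (qltb r y) eqn:E; [|reflexivity].
    apply qltb_spec in E. exfalso. apply (Qlt_irrefl (qval r)). eapply Qlt_trans; eauto.
Qed.

Lemma chain_next_spec r : D r = true ->
  D (chain_next r) = true /\ r < chain_next r /\ qltb r (chain_next r) = up.
Proof.
  intros Dr. destruct (least_spec (fun y => implb (D r) (chain_step_ok r y) = true))
    as [Hok _]; [rewrite Dr; apply chain_step_exists, Dr|].
  fold (chain_next r) in Hok. rewrite Dr in Hok. unfold chain_step_ok in Hok.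
  apply andb_prop in Hok as [[Dy Hlt]%andb_prop Hup%Bool.eqb_prop].
  now rewrite Nat.ltb_lt in Hlt.
Qed.

Lemma chain_in n : D (chain n) = true.
Proof.
  induction n as [|n IH]; cbn [chain].
  - destruct HD as [_ [Dnonempty _]]. now apply least_spec.
  - now apply chain_next_spec.
Qed.

Lemma chain_succ n : chain n < chain (S n) /\ qltb (chain n) (chain (S n)) = up.
Proof. apply chain_next_spec, chain_in. Qed.

Lemma chain_increasing n m : n < m -> chain n < chain m /\ qltb (chain n) (chain m) = up.
Proof.
  apply (rel_succ_to_lt (fun a b => a < b /\ qltb a b = up)); [|exact chain_succ].
  intros a b c [Hab Qab] [Hbc Qbc]. split; [lia | eapply qltb_eq_trans; eauto].
Qed.

Lemma chain_ge n : n <= chain n.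
Proof.
  induction n as [|n IH]; [lia|]. pose proof (chain_succ n). lia.
Qed.

Lemma chain_set_spec m : chain_set m = true <-> exists n, chain n = m.
Proof.
  unfold chain_set. rewrite Nat.eqb_eq. split; [eauto|].
  intros [n <-].
  destruct (least_spec (fun k => chain n <=? chain k = true)) as [Hle Hmin].
  { exists n. apply Nat.leb_refl. }
  set (k := least _) in *. specialize (Hmin n (Nat.leb_refl _)). apply Nat.leb_le in Hle.
  destruct (Nat.lt_ge_cases k n) as [Hlt|Hge].
  - pose proof (proj1 (chain_increasing k n Hlt)). lia.
  - f_equal. lia.
Qed.

Lemma chain_set_solution f l cols :
  (forall i j, i < j -> D i = true -> D j = true -> In (split_coloring f i j) cols) ->
  length (filter (fun c => Bool.eqb (Nat.odd c) up) cols) <= l ->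
  RT_solution l f chain_set.
Proof.
  intros Hcols Hl. split.
  - intros N. exists (chain N). split; [apply chain_ge|]. apply chain_set_spec. eauto.
  - exists (map Nat.div2 (filter (fun c => Bool.eqb (Nat.odd c) up) cols)).
    split; [now rewrite length_map|].
    intros x y Hxy [n <-]%chain_set_spec [m <-]%chain_set_spec.
    assert (Hnm : n < m).
    { destruct (Nat.lt_total n m) as [|[->|Hmn]]; [assumption|lia|].
      pose proof (proj1 (chain_increasing m n Hmn)). lia. }
    destruct (chain_increasing n m Hnm) as [_ Hup].
    assert (Hc := Hcols _ _ Hxy (chain_in n) (chain_in m)).
    unfold split_coloring in *. rewrite Hup in *.
    destruct (double_add_b2n_decode (f (chain n) (chain m)) up) as [Hdiv Hodd].
    apply in_map_iff. eexists. split; [exact Hdiv|].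
    apply filter_In. split; [exact Hc|]. rewrite Hodd. apply Bool.eqb_reflx.
Qed.

Lemma rec_in_chain_next X F :
  rec_in (join X (chi D)) F -> rec_in (join X (chi D)) (fun xs => chain_next (F xs)).
Proof.
  apply rec_in_comp1.
  apply (rec_in_least _
           (fun ys => implb (D (nth 1 ys 0)) (chain_step_ok (nth 1 ys 0) (nth 0 ys 0)))).
  - unfold chain_step_ok. rec_in_auto.
  - intros ys. cbn [nth]. destruct (D (nth 0 ys 0)) eqn:Dr.
    + destruct (chain_step_exists _ Dr) as [y Hy]. exists y. now rewrite Hy.
    + now exists 0.
Qed.

Lemma rec_in_chain X F :
  rec_in (join X (chi D)) F -> rec_in (join X (chi D)) (fun xs => chain (F xs)).
Proof.
  apply rec_in_comp1. apply (rec_in_iter _ chain chain_next); [reflexivity|].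
  apply rec_in_chain_next, rec_in_proj.
Qed.

#[local] Hint Resolve rec_in_chain : rec_in.

Lemma chain_set_computable X : computes (join X (chi D)) (chi chain_set).
Proof.
  assert (Hleast : rec_in (join X (chi D))
                     (fun xs => least (fun n => nth 0 xs 0 <=? chain n = true))).
  { apply (rec_in_least _ (fun ys => nth 1 ys 0 <=? chain (nth 0 ys 0))).
    - rec_in_auto.
    - intros ys. exists (nth 0 ys 0). apply Nat.leb_le, chain_ge. }
  apply computes_of_rec_in.
  apply (rec_in_ext _ (fun xs => Nat.b2n
    (chain (least (fun n => nth 0 xs 0 <=? chain n = true)) =? nth 0 xs 0))).
  - reflexivity.
  - rec_in_auto.
Qed.

End MonotoneChain.

Theorem theorem5p28 : forall k l : nat, 1 <= k -> 1 <= l ->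
  RT_le_c_DT k l (2 * k) (2 * l + 1).
Proof.
  intros k l _ _ f Hf. exists (split_coloring f).
  split; [now apply split_coloring_instance|].
  split; [apply split_coloring_computable|].
  intros D [HD [cols [Hlen Hcols]]].
  destruct (parity_class_small cols l Hlen) as [up Hup].
  exists (chain_set D up). split.
  - exact (chain_set_solution D up HD f l cols Hcols Hup).
  - exact (chain_set_computable D up HD (oracle2 f)).
Qed.
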